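(* Consider the two-agent zero-sum dynamic game with $K$ stages, dynamics constraints, and control bound constraints $a^i_t\le u^i_t\le b^i_t$ described in the context. Then the states and controls of any local FBNE at which strict complementarity holds (and whose policies satisfy the standing policy assumption in the context) also satisfy the first-order necessary conditions (COL1)–(COL6) for a local OLNE of the game.
   Context: Two-agent zero-sum discrete-time dynamic game with horizon $K\in\mathbb N$. States $x_t\in\mathbb R^n$, known initial state $x_1$; controls $u^i_t\in\mathbb R^{m_i}$, $i\in\{1,2\}$, subject to componentwise bounds $a^i_t\le u^i_t\le b^i_t$. Dynamics $x_{t+1}=f_t(x_t,u^1_t,u^2_t)$, $f_t$ smooth. Agent 1 has stage costs $\ell_t(x_t,u^1_t,u^2_t)$ and terminal cost $\ell_{K+1}(x_{K+1})$; $\ell^1_t=\ell_t$, $\ell^2_t=-\ell_t$, sufficiently smooth (possibly nonconvex). For agent $i$, $-i$ is the other agent; reordered arguments $\ell^i_t(x_t,u^i_t,u^{-i}_t)$, $f_t(x_t,u^i_t,u^{-i}_t)$. $T_t:=\{t,\dots,K\}$. $\perp$ denotes componentwise complementarity. Open-loop problem of agent $i$: minimize $\sum_{t=1}^K\ell^i_t+\ell^i_{K+1}$ over $x_{2:K+1},u^i_{1:K}$ s.t. dynamics and $a^i_t\le u^i_t\le b^i_t$. First-order conditions: for each $i$ there exist $\lambda^i_t,\underline\nu^i_t,\bar\nu^i_t$ ($t\in[K]$) with (COL1) $\nabla_{x_t}\ell^i_t+(\nabla_{x_t}f_t)^\top\lambda^i_t-\lambda^i_{t-1}=0$, $t=2,\dots,K$;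 (COL2) $\nabla_{u^i_t}\ell^i_t+(\nabla_{u^i_t}f_t)^\top\lambda^i_t-\underline\nu^i_t+\bar\nu^i_t=0$, $t\in[K]$; (COL3) $\nabla_{x_{K+1}}\ell^i_{K+1}-\lambda^i_K=0$; (COL4) dynamics hold; (COL5) $a^i_t\le u^i_t\perp\underline\nu^i_t\ge0$; (COL6) $0\le\bar\nu^i_t\perp u^i_t\le b^i_t$. Feedback problem of agent $i$ at time $t$, given differentiable policies $\pi^{-i}_s$: minimize $\sum_{s=t}^K\ell^i_s+\ell^i_{K+1}$ over $u^i_{t:K},u^{-i}_{t+1:K},x_{t+1:K+1}$ s.t. dynamics ($s\in T_t$), $u^{-i}_s=\pi^{-i}_s(x_s)$ ($s\in T_{t+1}$), $a^i_s\le u^i_s\le b^i_s$ ($s\in T_t$). First-order (FBNE necessary) conditions: there exist $\lambda^i_s,\underline\nu^i_s,\bar\nu^i_s$ ($s\in T_t$), $\psi^i_s$ ($s\in T_{t+1}$) with (CFB1) $\nabla_{u^{-i}_s}\ell^i_s+(\nabla_{u^{-i}_s}f_s)^\top\lambda^i_s-\psi^i_s=0$, $s\in T_{t+1}$; (CFB2) $\nabla_{u^i_s}\ell^i_s+(\nabla_{u^i_s}f_s)^\top\lambda^i_s-\underline\nu^i_s+\bar\nu^i_s=0$, $s\in T_t$; (CFB3) $\nabla_{x_{K+1}}\ell^i_{K+1}-\lambda^i_K=0$; (CFB4) dynamics for $s\in T_t$; (CFB5) $u^{-i}_s=\pi^{-i}_s(x_s)$, $s\in T_{t+1}$; (CFB6)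 $a^i_s\le u^i_s\perp\underline\nu^i_s\ge0$, $0\le\bar\nu^i_s\perp u^i_s\le b^i_s$, $s\in T_t$; (CFB7) $\nabla_{x_s}\ell^i_s-\lambda^i_{s-1}+(\nabla_{x_s}f_s)^\top\lambda^i_s+(\nabla_{x_s}\pi^{-i}_s)^\top\psi^i_s=0$, $s\in T_{t+1}$. A local FBNE is a trajectory generated by policies $\pi^1_t,\pi^2_t$ that locally solves all these problems for all $t$ and $i$. Strict complementarity: for every component $j$, exactly one of $[u^i_s]_j-[a^i_s]_j$ and $[\underline\nu^i_s]_j$ is zero, and exactly one of $[b^i_s]_j-[u^i_s]_j$ and $[\bar\nu^i_s]_j$ is zero. Standing policy assumption (taken as a consequence of strict complementarity): whenever a bound on $[u^i_s]_j$ is active at the equilibrium, the $j$-th row of $\nabla_{x_s}\pi^i_s(x_s)$ is zero. *)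

From HB Require Import structures.
From mathcomp Require Import all_boot all_order all_algebra.
From mathcomp Require Import all_classical all_reals all_analysis.
Set Implicit Arguments.
Unset Strict Implicit.
Unset Printing Implicit Defensive.
Import Order.TTheory GRing.Theory Num.Theory.
Import numFieldNormedType.Exports.
Local Open Scope ring_scope.

(* Conventions: vectors are ROW vectors 'rV[R]_p; entries v 0 j.
   Time is indexed by nat: stages t = 1..K, states x 1 .. x K.+1.        *)

Section Derivatives.
Variable R : realType.

(* usual Jacobian matrix (q x p) of f : R^p -> R^q at x, i.e. the transpose
   of the library's 'J f x (which satisfies 'D_v f x = v *m 'J f x). *)
Definition Jac p q (f : 'rV[R]_p -> 'rV[R]_q) (x : 'rV[R]_p) : 'M[R]_(q, p) :=
  ('J f x)^T.

Definition grad p (g : 'rV[R]_p -> R) (x : 'rV[R]_p) : 'rV[R]_p :=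
  Jac (fun y => const_mx (g y) : 'rV[R]_1) x.

Definition compl_lo m (a u nu : 'rV[R]_m) : Prop :=
  forall j, a 0 j <= u 0 j /\ 0 <= nu 0 j /\ (u 0 j - a 0 j) * nu 0 j = 0.
Definition compl_up m (nu u b : 'rV[R]_m) : Prop :=
  forall j, 0 <= nu 0 j /\ u 0 j <= b 0 j /\ nu 0 j * (b 0 j - u 0 j) = 0.

Definition strict_lo m (a u nu : 'rV[R]_m) : Prop :=
  forall j, (u 0 j - a 0 j == 0) != (nu 0 j == 0).
Definition strict_up m (nu u b : 'rV[R]_m) : Prop :=
  forall j, (b 0 j - u 0 j == 0) != (nu 0 j == 0).

Definition in_box m (a u b : 'rV[R]_m) : Prop :=
  forall j, a 0 j <= u 0 j <= b 0 j.
End Derivatives.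

(* Generic agent i, with own control dimension mi and the other agent's
   control dimension mo; li, fi are given with reordered arguments
   (x, u^i, u^{-i}) as in the paper; lT is the terminal cost l^i_{K+1}. *)
Section Agent.
Variables (R : realType) (n mi mo K : nat).
Variable li : nat -> 'rV[R]_n -> 'rV[R]_mi -> 'rV[R]_mo -> R.
Variable lT : 'rV[R]_n -> R.
Variable fi : nat -> 'rV[R]_n -> 'rV[R]_mi -> 'rV[R]_mo -> 'rV[R]_n.
Variables (a b : nat -> 'rV[R]_mi).

Definition OL_conditions (x : nat -> 'rV[R]_n) (ui : nat -> 'rV[R]_mi)
    (uo : nat -> 'rV[R]_mo) (lam : nat -> 'rV[R]_n)
    (nlo nup : nat -> 'rV[R]_mi) : Prop :=
  (forall t, (2 <= t <= K)%N ->
     grad (fun y => li t y (ui t) (uo t)) (x t)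
     + lam t *m Jac (fun y => fi t y (ui t) (uo t)) (x t) - lam t.-1 = 0)
  /\ (forall t, (1 <= t <= K)%N ->
     grad (fun v => li t (x t) v (uo t)) (ui t)
     + lam t *m Jac (fun v => fi t (x t) v (uo t)) (ui t) - nlo t + nup t = 0)
  /\ grad lT (x K.+1) - lam K = 0
  /\ (forall t, (1 <= t <= K)%N -> x t.+1 = fi t (x t) (ui t) (uo t))
  /\ (forall t, (1 <= t <= K)%N -> compl_lo (a t) (ui t) (nlo t))
  /\ (forall t, (1 <= t <= K)%N -> compl_up (nup t) (ui t) (b t)).

Definition FB_conditions (po : nat -> 'rV[R]_n -> 'rV[R]_mo) (t : nat)
    (x : nat -> 'rV[R]_n) (ui : nat -> 'rV[R]_mi) (uo : nat -> 'rV[R]_mo)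
    (lam : nat -> 'rV[R]_n) (nlo nup : nat -> 'rV[R]_mi)
    (psi : nat -> 'rV[R]_mo) : Prop :=
  (forall s, (t < s <= K)%N ->
     grad (fun w => li s (x s) (ui s) w) (uo s)
     + lam s *m Jac (fun w => fi s (x s) (ui s) w) (uo s) - psi s = 0)
  /\ (forall s, (t <= s <= K)%N ->
     grad (fun v => li s (x s) v (uo s)) (ui s)
     + lam s *m Jac (fun v => fi s (x s) v (uo s)) (ui s) - nlo s + nup s = 0)
  /\ grad lT (x K.+1) - lam K = 0
  /\ (forall s, (t <= s <= K)%N -> x s.+1 = fi s (x s) (ui s) (uo s))
  /\ (forall s, (t < s <= K)%N -> uo s = po s (x s))
  /\ (forall s, (t <= s <= K)%N ->
        compl_lo (a s) (ui s) (nlo s) /\ compl_up (nup s) (ui s) (b s))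
  /\ (forall s, (t < s <= K)%N ->
     grad (fun y => li s y (ui s) (uo s)) (x s) - lam s.-1
     + lam s *m Jac (fun y => fi s y (ui s) (uo s)) (x s)
     + psi s *m Jac (po s) (x s) = 0).

Definition FB_strict (t : nat) (ui : nat -> 'rV[R]_mi)
    (nlo nup : nat -> 'rV[R]_mi) : Prop :=
  forall s, (t <= s <= K)%N ->
    strict_lo (a s) (ui s) (nlo s) /\ strict_up (nup s) (ui s) (b s).

Definition cost_from (t : nat) (x : nat -> 'rV[R]_n) (ui : nat -> 'rV[R]_mi)
    (uo : nat -> 'rV[R]_mo) : R :=
  \sum_(t <= s < K.+1) li s (x s) (ui s) (uo s) + lT (x K.+1).

(* (x, ui, uo) locally solves the feedback problem of agent i at time t:
   decision variables u^i_{t:K}, u^{-i}_{t+1:K}, x_{t+1:K+1}; x_t and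
   u^{-i}_t are fixed at their equilibrium values. *)
Definition FB_local_solution (po : nat -> 'rV[R]_n -> 'rV[R]_mo) (t : nat)
    (x : nat -> 'rV[R]_n) (ui : nat -> 'rV[R]_mi) (uo : nat -> 'rV[R]_mo) : Prop :=
  exists eps : R, 0 < eps /\
  forall (x' : nat -> 'rV[R]_n) (ui' : nat -> 'rV[R]_mi) (uo' : nat -> 'rV[R]_mo),
    x' t = x t -> uo' t = uo t ->
    (forall s, (t <= s <= K)%N -> x' s.+1 = fi s (x' s) (ui' s) (uo' s)) ->
    (forall s, (t < s <= K)%N -> uo' s = po s (x' s)) ->
    (forall s, (t <= s <= K)%N -> in_box (a s) (ui' s) (b s)) ->
    (forall s, (t <= s <= K)%N -> `|ui' s - ui s| < eps) ->
    (forall s, (t < s <= K)%N -> `|uo' s - uo s| < eps) ->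
    (forall s, (t < s <= K.+1)%N -> `|x' s - x s| < eps) ->
    cost_from t x ui uo <= cost_from t x' ui' uo'.
End Agent.

(* The zero-sum game: l^1 = l, l^2 = -l, with arguments reordered for
   agent 2. *)
Section Game.
Variables (R : realType) (n m1 m2 K : nat).
Variable l : nat -> 'rV[R]_n -> 'rV[R]_m1 -> 'rV[R]_m2 -> R.
Variable lT : 'rV[R]_n -> R.
Variable f : nat -> 'rV[R]_n -> 'rV[R]_m1 -> 'rV[R]_m2 -> 'rV[R]_n.

Definition l2 : nat -> 'rV[R]_n -> 'rV[R]_m2 -> 'rV[R]_m1 -> R :=
  fun t x v w => - l t x w v.
Definition lT2 : 'rV[R]_n -> R := fun x => - lT x.
Definition f2 : nat -> 'rV[R]_n -> 'rV[R]_m2 -> 'rV[R]_m1 -> 'rV[R]_n :=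
  fun t x v w => f t x w v.

Variables (a1 b1 : nat -> 'rV[R]_m1) (a2 b2 : nat -> 'rV[R]_m2).

Definition local_FBNE (pi1 : nat -> 'rV[R]_n -> 'rV[R]_m1)
    (pi2 : nat -> 'rV[R]_n -> 'rV[R]_m2)
    (x : nat -> 'rV[R]_n) (u1 : nat -> 'rV[R]_m1) (u2 : nat -> 'rV[R]_m2) : Prop :=
  (forall t, (1 <= t <= K)%N ->
     (forall y, differentiable (pi1 t) y) /\ (forall y, differentiable (pi2 t) y))
  /\ (forall t, (1 <= t <= K)%N ->
     [/\ u1 t = pi1 t (x t), u2 t = pi2 t (x t)
       & x t.+1 = f t (x t) (u1 t) (u2 t)])
  /\ (forall t, (1 <= t <= K)%N ->
     in_box (a1 t) (u1 t) (b1 t) /\ in_box (a2 t) (u2 t) (b2 t))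
  /\ (forall t, (1 <= t <= K)%N ->
     FB_local_solution K l lT f a1 b1 pi2 t x u1 u2
     /\ FB_local_solution K l2 lT2 f2 a2 b2 pi1 t x u2 u1).
End Game.

From HB Require Import structures.
From mathcomp Require Import all_boot all_order all_algebra.
From mathcomp Require Import all_classical all_reals all_analysis.
From mathcomp Require Import zify.

(* In the zero-sum game the two agents' costates at the time-1 feedback
   problems are opposite, [lam2 s = - lam1 s], by backward induction from
   the terminal condition (CFB3).  Given this, the control condition (CFB2)
   of one agent identifies the other agent's multiplier [psi s] of the policy
   constraint (CFB1) with the gap [nup s - nlo s] of its own bound
   multipliers.  By strict complementarity this gap is supported on active
   bounds, where the rows of the policy Jacobian vanish, so the feedback term
   [psi s *m Jac (pi s) (x s)] drops out of (CFB7), which then is (COL1); the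
   remaining open-loop conditions are restrictions of the feedback ones. *)

Set Implicit Arguments.
Unset Strict Implicit.
Unset Printing Implicit Defensive.

Import Order.TTheory GRing.Theory Num.Theory.
Import numFieldNormedType.Exports.
Local Open Scope ring_scope.

Lemma jacobianN (R : realType) p q (F : 'rV[R]_p -> 'rV[R]_q) z :
  differentiable F z -> 'J (fun y => - F y) z = - 'J F z.
Proof.
move=> dF; apply/matrixP => i j; rewrite /jacobian !mxE.
have := congr1 (fun k : 'rV[R]_p -> 'rV[R]_q => k (delta_mx 0 i) 0 j) (diffN dF).
by rewrite /= [in RHS]mxE.
Qed.

Lemma gradN (R : realType) p (g : 'rV[R]_p -> R) z :
  differentiable g z -> grad (fun y => - g y) z = - grad g z.
Proof.
move=> dg; rewrite /grad /Jac.
have dG : differentiable (fun y => const_mx (g y) : 'rV[R]_1) z.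
  have -> : (fun y => const_mx (g y)) = (fun y => g y *: (const_mx 1 : 'rV[R]_1)).
    by apply/funext => y; apply/matrixP => i j; rewrite !mxE mulr1.
  exact: differentiableZl.
have -> : (fun y => const_mx (- g y) : 'rV[R]_1) = (fun y => - const_mx (g y)).
  by apply/funext => y; apply/matrixP => i j; rewrite !mxE.
by rewrite (jacobianN dG) linearN.
Qed.

Section Slices.
Variables (R : realType) (U V W Z : normedModType R).
Variable F : U * V * W -> Z.

Lemma differentiable_slice1 y u v :
  differentiable F (y, u, v) -> differentiable (fun y => F (y, u, v)) y.
Proof.
move=> dF; apply: differentiable_comp dF.
by apply: differentiable_pair => //; apply: differentiable_pair.
Qed.

Lemma differentiable_slice2 y u v :
  differentiable F (y, u, v) -> differentiable (fun u => F (y, u, v)) u.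
Proof.
move=> dF; apply: differentiable_comp dF.
by apply: differentiable_pair => //; apply: differentiable_pair.
Qed.

Lemma differentiable_slice3 y u v :
  differentiable F (y, u, v) -> differentiable (fun v => F (y, u, v)) v.
Proof.
move=> dF; apply: differentiable_comp dF.
by apply: differentiable_pair => //; apply: differentiable_pair.
Qed.
End Slices.

Lemma mulmx_row0 (R : pzSemiRingType) p q (v : 'rV[R]_p) (M : 'M[R]_(p, q)) :
  (forall j, v 0 j != 0 -> row j M = 0) -> v *m M = 0.
Proof.
move=> vM; apply/rowP => k; rewrite !mxE; apply: big1 => j _.
have [->|/vM Mj] := eqVneq (v 0 j) 0; first by rewrite mul0r.
by have := congr1 (fun r : 'rV_q => r 0 k) Mj; rewrite !mxE => ->; rewrite mulr0.
Qed.

Section StrictComplementarity.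
Variables (R : realType) (m : nat) (a u b nlo nup : 'rV[R]_m).
Hypotheses (Slo : strict_lo a u nlo) (Sup : strict_up nup u b).

Lemma strict_compl_active j :
  (nup - nlo) 0 j != 0 -> u 0 j = a 0 j \/ u 0 j = b 0 j.
Proof.
rewrite !mxE; have [nlo0|nlo_neq0] := eqVneq (nlo 0 j) 0.
  have [nup0|nup_neq0] := eqVneq (nup 0 j) 0; first by rewrite nlo0 nup0 subrr eqxx.
  move=> _; right; have := Sup j.
  by rewrite (negbTE nup_neq0) eqbF_neg negbK subr_eq0 => /eqP.
move=> _; left; have := Slo j.
by rewrite (negbTE nlo_neq0) eqbF_neg negbK subr_eq0 => /eqP.
Qed.

Lemma multiplier_gap_mulmx_eq0 q (M : 'M[R]_(m, q)) :
  (forall j, u 0 j = a 0 j \/ u 0 j = b 0 j -> row j M = 0) ->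
  (nup - nlo) *m M = 0.
Proof. by move=> M0; apply: mulmx_row0 => j /strict_compl_active /M0. Qed.
End StrictComplementarity.

Section OpenLoopFromFeedback.
Variables (R : realType) (n mi mo K : nat).
Variable li : nat -> 'rV[R]_n -> 'rV[R]_mi -> 'rV[R]_mo -> R.
Variable lT : 'rV[R]_n -> R.
Variable fi : nat -> 'rV[R]_n -> 'rV[R]_mi -> 'rV[R]_mo -> 'rV[R]_n.
Variables (a b : nat -> 'rV[R]_mi) (po : nat -> 'rV[R]_n -> 'rV[R]_mo).
Variables (x : nat -> 'rV[R]_n) (ui : nat -> 'rV[R]_mi) (uo : nat -> 'rV[R]_mo).

Lemma OL_conditions_horizon0 :
  OL_conditions 0 li lT fi a b x ui uo
    (fun _ => grad lT (x 1%N)) (fun _ => 0) (fun _ => 0).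
Proof.
by split; [|split; [|split; [exact: subrr|split; [|split]]]] => t; lia.
Qed.

Lemma FB_conditions1_OL lam nlo nup psi :
  FB_conditions K li lT fi a b po 1 x ui uo lam nlo nup psi ->
  (forall s, (1 < s <= K)%N -> psi s *m Jac (po s) (x s) = 0) ->
  OL_conditions K li lT fi a b x ui uo lam nlo nup.
Proof.
move=> [_ [CFB2 [CFB3 [CFB4 [_ [CFB6 CFB7]]]]]] feedback0.
split; [|split; [by []|split; [by []|split; [by []|split]]]].
- by move=> t t_gt1; move: (CFB7 t t_gt1); rewrite feedback0 // addr0 addrAC.
- by move=> t /CFB6 [].
- by move=> t /CFB6 [].
Qed.
End OpenLoopFromFeedback.

Section ZeroSumFeedback.
Variables (R : realType) (n m1 m2 K : nat).
Variable l : nat -> 'rV[R]_n -> 'rV[R]_m1 -> 'rV[R]_m2 -> R.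
Variable lT : 'rV[R]_n -> R.
Variable f : nat -> 'rV[R]_n -> 'rV[R]_m1 -> 'rV[R]_m2 -> 'rV[R]_n.
Variables (a1 b1 : nat -> 'rV[R]_m1) (a2 b2 : nat -> 'rV[R]_m2).
Variables (pi1 : nat -> 'rV[R]_n -> 'rV[R]_m1) (pi2 : nat -> 'rV[R]_n -> 'rV[R]_m2).
Variables (x : nat -> 'rV[R]_n) (u1 : nat -> 'rV[R]_m1) (u2 : nat -> 'rV[R]_m2).
Variables (lam1 : nat -> 'rV[R]_n) (nlo1 nup1 : nat -> 'rV[R]_m1).
Variables (lam2 : nat -> 'rV[R]_n) (nlo2 nup2 : nat -> 'rV[R]_m2).
Variables (psi1 : nat -> 'rV[R]_m2) (psi2 : nat -> 'rV[R]_m1).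

Hypothesis l_diff : forall t, (1 <= t <= K)%N ->
  forall p, differentiable (fun q : 'rV[R]_n * 'rV[R]_m1 * 'rV[R]_m2 =>
                              l t q.1.1 q.1.2 q.2) p.
Hypothesis lT_diff : forall y, differentiable lT y.
Hypothesis FB1 : FB_conditions K l lT f a1 b1 pi2 1 x u1 u2 lam1 nlo1 nup1 psi1.
Hypothesis FB2 :
  FB_conditions K (l2 l) (lT2 lT) (f2 f) a2 b2 pi1 1 x u2 u1 lam2 nlo2 nup2 psi2.
Hypothesis strict1 : FB_strict K a1 b1 1 u1 nlo1 nup1.
Hypothesis strict2 : FB_strict K a2 b2 1 u2 nlo2 nup2.
Hypothesis policy1 : forall s, (1 <= s <= K)%N -> forall j,
  u1 s 0 j = a1 s 0 j \/ u1 s 0 j = b1 s 0 j -> row j (Jac (pi1 s) (x s)) = 0.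
Hypothesis policy2 : forall s, (1 <= s <= K)%N -> forall j,
  u2 s 0 j = a2 s 0 j \/ u2 s 0 j = b2 s 0 j -> row j (Jac (pi2 s) (x s)) = 0.

Lemma feedback1_term_eq0 s : (1 < s <= K)%N -> lam2 s = - lam1 s ->
  psi1 s *m Jac (pi2 s) (x s) = 0.
Proof.
move=> s_gt1 lam2E; have s_ge1 : (1 <= s <= K)%N by lia.
have [CFB1 _] := FB1; have [_ [CFB2 _]] := FB2.
have dl := differentiable_slice3 (l_diff s_ge1 (x s, u1 s, u2 s)).
have psi1_gap : psi1 s = nup2 s - nlo2 s.
  move: (CFB2 s s_ge1); rewrite /l2 /f2 (gradN dl) lam2E mulNmx -opprD.
  rewrite (subr0_eq (CFB1 s s_gt1)) -addrA addrC => /subr0_eq <-.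
  by rewrite addrC.
have [lo2 up2] := strict2 s_ge1.
by rewrite psi1_gap (multiplier_gap_mulmx_eq0 lo2 up2 (policy2 s_ge1)).
Qed.

Lemma feedback2_term_eq0 s : (1 < s <= K)%N -> lam2 s = - lam1 s ->
  psi2 s *m Jac (pi1 s) (x s) = 0.
Proof.
move=> s_gt1 lam2E; have s_ge1 : (1 <= s <= K)%N by lia.
have [_ [CFB2 _]] := FB1; have [CFB1 _] := FB2.
have dl := differentiable_slice2 (l_diff s_ge1 (x s, u1 s, u2 s)).
have psi2_gap : psi2 s = nup1 s - nlo1 s.
  move: (CFB1 s s_gt1); rewrite /l2 /f2 (gradN dl) lam2E mulNmx -opprD.
  move=> /subr0_eq <-.
  by move: (CFB2 s s_ge1); rewrite -addrA => /addr0_eq ->; rewrite addrC.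
have [lo1 up1] := strict1 s_ge1.
by rewrite psi2_gap (multiplier_gap_mulmx_eq0 lo1 up1 (policy1 s_ge1)).
Qed.

Lemma costate_opp s : (1 <= s <= K)%N -> lam2 s = - lam1 s.
Proof.
have [_ [_ [CFB3_1 [_ [_ [_ CFB7_1]]]]]] := FB1.
have [_ [_ [CFB3_2 [_ [_ [_ CFB7_2]]]]]] := FB2.
suff costate_opp_from_end k : (k < K)%N -> lam2 (K - k) = - lam1 (K - k).
  move=> s_range; have := costate_opp_from_end (K - s)%N.
  by rewrite subKn; [apply; lia | lia].
elim: k => [_|k IH k_lt].
  by rewrite subn0 -(subr0_eq CFB3_2) -(subr0_eq CFB3_1); exact: gradN.
have s_gt1 : (1 < K - k <= K)%N by lia.
have s_ge1 : (1 <= K - k <= K)%N by lia.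
have lam2E := IH (ltnW k_lt).
have dl := differentiable_slice1 (l_diff s_ge1 (x (K - k), u1 (K - k), u2 (K - k))).
rewrite subnS.
move: (CFB7_1 _ s_gt1); rewrite feedback1_term_eq0 // addr0 addrAC => /subr0_eq <-.
move: (CFB7_2 _ s_gt1); rewrite feedback2_term_eq0 // addr0 addrAC.
by rewrite /l2 /f2 (gradN dl) lam2E mulNmx -opprD => /subr0_eq <-.
Qed.

End ZeroSumFeedback.

Theorem theorem2 (R : realType) (n m1 m2 K : nat)
  (l : nat -> 'rV[R]_n -> 'rV[R]_m1 -> 'rV[R]_m2 -> R)
  (lT : 'rV[R]_n -> R)
  (f : nat -> 'rV[R]_n -> 'rV[R]_m1 -> 'rV[R]_m2 -> 'rV[R]_n)
  (a1 b1 : nat -> 'rV[R]_m1) (a2 b2 : nat -> 'rV[R]_m2)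
  (pi1 : nat -> 'rV[R]_n -> 'rV[R]_m1) (pi2 : nat -> 'rV[R]_n -> 'rV[R]_m2)
  (x : nat -> 'rV[R]_n) (u1 : nat -> 'rV[R]_m1) (u2 : nat -> 'rV[R]_m2) :
  (forall t, (1 <= t <= K)%N -> forall p : 'rV[R]_n * 'rV[R]_m1 * 'rV[R]_m2,
     differentiable (fun q : 'rV[R]_n * 'rV[R]_m1 * 'rV[R]_m2 =>
                       f t q.1.1 q.1.2 q.2) p) ->
  (forall t, (1 <= t <= K)%N -> forall p : 'rV[R]_n * 'rV[R]_m1 * 'rV[R]_m2,
     differentiable (fun q : 'rV[R]_n * 'rV[R]_m1 * 'rV[R]_m2 =>
                       l t q.1.1 q.1.2 q.2) p) ->
  (forall y, differentiable lT y) ->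
  local_FBNE K l lT f a1 b1 a2 b2 pi1 pi2 x u1 u2 ->
  (forall t, (1 <= t <= K)%N ->
     exists lam nlo nup psi,
       FB_conditions K l lT f a1 b1 pi2 t x u1 u2 lam nlo nup psi
       /\ FB_strict K a1 b1 t u1 nlo nup) ->
  (forall t, (1 <= t <= K)%N ->
     exists lam nlo nup psi,
       FB_conditions K (l2 l) (lT2 lT) (f2 f) a2 b2 pi1 t x u2 u1 lam nlo nup psi
       /\ FB_strict K a2 b2 t u2 nlo nup) ->
  (* standing policy assumption *)
  (forall s, (1 <= s <= K)%N -> forall j,
     u1 s 0 j = a1 s 0 j \/ u1 s 0 j = b1 s 0 j ->
     row j (Jac (pi1 s) (x s)) = 0) ->
  (forall s, (1 <= s <= K)%N -> forall j,
     u2 s 0 j = a2 s 0 j \/ u2 s 0 j = b2 s 0 j ->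
     row j (Jac (pi2 s) (x s)) = 0) ->
  exists (lam1 : nat -> 'rV[R]_n) (nlo1 nup1 : nat -> 'rV[R]_m1)
         (lam2 : nat -> 'rV[R]_n) (nlo2 nup2 : nat -> 'rV[R]_m2),
    OL_conditions K l lT f a1 b1 x u1 u2 lam1 nlo1 nup1
    /\ OL_conditions K (l2 l) (lT2 lT) (f2 f) a2 b2 x u2 u1 lam2 nlo2 nup2.
Proof.
move=> _ l_diff lT_diff _ FB1 FB2 policy1 policy2.
have [->|K_gt0] := posnP K.
  exists (fun _ => grad lT (x 1%N)), (fun _ => 0), (fun _ => 0),
         (fun _ => grad (lT2 lT) (x 1%N)), (fun _ => 0), (fun _ => 0).
  by split; exact: OL_conditions_horizon0.
have stage1 : (1 <= 1 <= K)%N by rewrite leqnn K_gt0.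
have [lam1 [nlo1 [nup1 [psi1 [FB1_1 strict1]]]]] := FB1 1%N stage1.
have [lam2 [nlo2 [nup2 [psi2 [FB2_1 strict2]]]]] := FB2 1%N stage1.
have lam2E := costate_opp l_diff lT_diff FB1_1 FB2_1 strict1 strict2 policy1 policy2.
exists lam1, nlo1, nup1, lam2, nlo2, nup2; split.
- apply: (FB_conditions1_OL FB1_1) => s s_gt1.
  by apply: (feedback1_term_eq0 l_diff FB1_1 FB2_1 strict2 policy2 s_gt1); apply: lam2E; lia.
- apply: (FB_conditions1_OL FB2_1) => s s_gt1.
  by apply: (feedback2_term_eq0 l_diff FB1_1 FB2_1 strict1 policy1 s_gt1); apply: lam2E; lia.
Qed.
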